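(* Let $\mathbf{b}=(b_n)_{n\in\mathbb{N}_0}$ be a $D$-sequence with $\frac{b_{n+1}}{b_n}\to\infty$, and let $\iota:(\mathbb{Z},\tau_{\mathbf{b}})\to c_0(\mathbb{T})$, $k\mapsto(\frac{k}{b_n}+\mathbb{Z})_{n\in\mathbb{N}}$. Then $\iota(\mathbb{Z})$ is dually embedded in $c_0(\mathbb{T})$: every continuous character of $(\mathbb{Z},\tau_{\mathbf{b}})$ is of the form $\psi\circ\iota$ for some continuous character $\psi$ of $c_0(\mathbb{T})$.
   Context: $\mathbb{T}=\mathbb{R}/\mathbb{Z}$; $\mathbb{T}_m=[-\frac{1}{4m},\frac{1}{4m}]+\mathbb{Z}$. $c_0(\mathbb{T})$ is the group of sequences $(x_n)_{n\in\mathbb{N}}$ in $\mathbb{T}$ converging to $0$, with the topology of uniform convergence. A $D$-sequence is a sequence $\mathbf{b}=(b_n)_{n\in\mathbb{N}_0}$ of natural numbers with $b_0=1$, $b_n\mid b_{n+1}$, $b_n\neq b_{n+1}$. $\tau_{\mathbf{b}}$ is the group topology on $\mathbb{Z}$ with neighborhood basis at $0$ given by $V_{\mathbf{b},m}=\{k\in\mathbb{Z}: \frac{k}{b_n}+\mathbb{Z}\in\mathbb{T}_m \text{ for all } n\in\mathbb{N}\}$, $m\in\mathbb{N}$. *)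

From Stdlib Require Import Reals ZArith Arith.
Open Scope R_scope.

(* The circle group T = R/Z is represented by real representatives. *)

Definition is_int (x : R) : Prop := exists z : Z, x = IZR z.

Definition near0 (x eps : R) : Prop := exists z : Z, Rabs (x - IZR z) < eps.

Definition in_Tm (m : nat) (x : R) : Prop :=
  exists z : Z, Rabs (x - IZR z) <= 1 / (4 * INR m).

Definition D_sequence (b : nat -> nat) : Prop :=
  b 0%nat = 1%nat /\
  (forall n, (0 < b n)%nat) /\
  (forall n, Nat.divide (b n) (b (S n))) /\
  (forall n, b n <> b (S n)).

Definition ratio_to_infty (b : nat -> nat) : Prop :=
  forall M : R, exists N : nat, forall n : nat, (N <= n)%nat ->
    M <= INR (b (S n)) / INR (b n).

Definition V_b (b : nat -> nat) (m : nat) (k : Z) : Prop :=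
  forall n : nat, (1 <= n)%nat -> in_Tm m (IZR k / INR (b n)).

Definition Z_character (chi : Z -> R) : Prop :=
  forall a c : Z, is_int (chi (a + c)%Z - chi a - chi c).

(* Continuity of chi : (Z, tau_b) -> T at every point; the neighbourhoods of k
   in tau_b are the sets k + V_{b,m}, m in N. *)
Definition tau_b_continuous (b : nat -> nat) (chi : Z -> R) : Prop :=
  forall (k : Z) (eps : R), 0 < eps ->
    exists m : nat, (1 <= m)%nat /\
      forall j : Z, V_b b m j -> near0 (chi (k + j)%Z - chi k) eps.

(* c_0(T): sequences indexed by N = {1,2,...}; the entry of index n >= 1 is
   stored at position n-1 of x : nat -> R. *)
Definition in_c0 (x : nat -> R) : Prop :=
  forall eps : R, 0 < eps -> exists N : nat, forall i : nat, (N <= i)%nat ->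
    near0 (x i) eps.

Definition c0_continuous_character (psi : (nat -> R) -> R) : Prop :=
  (* well defined on classes modulo Z^N *)
  (forall x y, in_c0 x -> in_c0 y -> (forall i, is_int (x i - y i)) ->
     is_int (psi x - psi y)) /\
  (forall x y, in_c0 x -> in_c0 y ->
     is_int (psi (fun i => x i + y i) - psi x - psi y)) /\
  (forall x, in_c0 x -> forall eps, 0 < eps -> exists delta, 0 < delta /\
     forall y, in_c0 y -> (forall i, near0 (x i - y i) delta) ->
       near0 (psi x - psi y) eps).

Definition iota (b : nat -> nat) (k : Z) : nat -> R :=
  fun i => IZR k / INR (b (S i)).

(* A character chi of Z is k |-> k * alpha modulo Z, with alpha = chi 1.
   Continuity of chi at 0 gives m such that j * alpha is within 1/8 of Z for
   every j in V_{b,m}.  The heart of the proof shows that then b N * alpha is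
   an integer for some level N.  Call a level N good (with d = 1/(4m)) when
   some t * b N, |t| <= d q_N / 2 (q_N = b (N+1) / b N), moves alpha by an
   amount in [d/8, 7/8] modulo Z.
   - If good levels are cofinal, adding such t * b N at ever higher levels
     keeps us inside V_{b,m} and climbs j * alpha by >= d/8 each time, so it
     reaches [1/8, 7/8] modulo Z: impossible.
   - Otherwise, for large N no multiple hits, hence b N * alpha = z + e with
     |e| q_N < 1/2; these errors propagate rigidly (e_{N+1} = q_N e_N) while
     staying below 1/2, so they vanish since b is unbounded.
   Given b N * alpha in Z, psi(x) = b (N+1) alpha * x_N is a continuous
   character of c_0(T) with psi (iota k) = k alpha = chi k modulo Z. *)

From Stdlib Require Import Reals ZArith Arith Lra Lia Classical.
Open Scope R_scope.

Lemma is_int_IZR z : is_int (IZR z).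
Proof. exists z; reflexivity. Qed.

Lemma is_int_add x y : is_int x -> is_int y -> is_int (x + y).
Proof. intros [a ->] [c ->]; exists (a + c)%Z; now rewrite plus_IZR. Qed.

Lemma is_int_opp x : is_int x -> is_int (- x).
Proof. intros [a ->]; exists (- a)%Z; now rewrite opp_IZR. Qed.

Lemma is_int_sub x y : is_int x -> is_int y -> is_int (x - y).
Proof. intros; unfold Rminus; apply is_int_add; auto using is_int_opp. Qed.

Lemma is_int_mul x y : is_int x -> is_int y -> is_int (x * y).
Proof. intros [a ->] [c ->]; exists (a * c)%Z; now rewrite mult_IZR. Qed.

Lemma is_int_eq x y : x = y -> is_int x -> is_int y.
Proof. now intros ->. Qed.

Lemma small_error_unique z e z' e' :
  IZR z + e = IZR z' + e' -> Rabs e < 1/2 -> Rabs e' < 1/2 -> e = e'.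
Proof.
  intros Heq He He'.
  assert (Hz : (z - z')%Z = 0%Z).
  { apply one_IZR_lt1; rewrite minus_IZR.
    apply Rabs_def2 in He; apply Rabs_def2 in He'; lra. }
  assert (Hzz : IZR z = IZR z') by (f_equal; lia).
  lra.
Qed.

Lemma not_near_and_far x z z' :
  1/8 <= x - IZR z <= 7/8 -> Rabs (x - IZR z') < 1/8 -> False.
Proof.
  intros Hfar Hnear; apply Rabs_def2 in Hnear.
  destruct (Z_lt_le_dec z z') as [Hlt|Hge].
  - assert (IZR z + 1 <= IZR z') by (rewrite <- succ_IZR; apply IZR_le; lia); lra.
  - apply IZR_le in Hge; lra.
Qed.

Lemma nat_floor r : 0 <= r -> exists k : nat, INR k <= r < INR k + 1.
Proof.
  intros Hr; destruct (archimed r) as [Hup1 Hup2].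
  assert (Hpos : (0 < up r)%Z) by (apply lt_IZR; lra).
  exists (Z.to_nat (up r - 1)).
  rewrite INR_IZR_INZ, Z2Nat.id, minus_IZR by lia; simpl IZR; lra.
Qed.

Lemma bounded_multiples_zero e c : (forall k : nat, INR k * Rabs e <= c) -> e = 0.
Proof.
  intros Hb; destruct (Req_dec e 0) as [|Hne]; [assumption|exfalso].
  destruct (INR_archimed (Rabs e) c) as [k Hk]; [apply Rabs_pos_lt; assumption|].
  specialize (Hb k); lra.
Qed.

Lemma character_linear chi :
  Z_character chi -> forall k, is_int (chi k - IZR k * chi 1%Z).
Proof.
  intros Hchi.
  assert (H0 : is_int (chi 0%Z)).
  { apply is_int_eq with (- (chi (0 + 0)%Z - chi 0%Z - chi 0%Z)); [simpl; ring|].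
    apply is_int_opp, Hchi. }
  apply Z.peano_ind.
  - apply is_int_eq with (chi 0%Z); [simpl; ring|exact H0].
  - intros x Hx; rewrite <- Z.add_1_r.
    apply is_int_eq with ((chi (x + 1)%Z - chi x - chi 1%Z) + (chi x - IZR x * chi 1%Z)).
    + rewrite plus_IZR; simpl; ring.
    + apply is_int_add; auto.
  - intros x Hx.
    assert (Hstep := Hchi (Z.pred x) 1%Z); replace (Z.pred x + 1)%Z with x in Hstep by lia.
    apply is_int_eq with ((chi x - IZR x * chi 1%Z) - (chi x - chi (Z.pred x) - chi 1%Z)).
    + rewrite <- Z.sub_1_r, minus_IZR; simpl; ring.
    + apply is_int_sub; auto.
Qed.

Section DSequence.
Variable b : nat -> nat.
Hypothesis hb : D_sequence b.

Lemma b_pos n : 0 < INR (b n).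
Proof. destruct hb as [_ [Hpos _]]; apply lt_0_INR, Hpos. Qed.

Lemma b_divide n N : (n <= N)%nat -> Nat.divide (b n) (b N).
Proof.
  destruct hb as [_ [_ [Hdiv _]]].
  induction 1; [apply Nat.divide_refl|].
  eapply Nat.divide_trans; eauto.
Qed.

(* Since b strictly increases along divisibility, b n >= n + 1. *)
Lemma b_gt_index n : (n < b n)%nat.
Proof.
  destruct hb as [H0 [Hpos [Hdiv Hneq]]].
  induction n as [|n IH]; [rewrite H0; lia|].
  destruct (Hdiv n) as [c Hc]; specialize (Hneq n).
  pose proof (Hpos n); pose proof (Hpos (S n)).
  destruct c as [|[|c]]; simpl in Hc; nia.
Qed.

Lemma b_mono n N : (n <= N)%nat -> INR (b n) <= INR (b N).
Proof.
  intros HnN; apply le_INR, Nat.divide_pos_le; [|now apply b_divide].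
  destruct hb as [_ [Hpos _]]; apply Hpos.
Qed.

Lemma b_multiple_int n N t : (n <= N)%nat -> is_int (IZR t * INR (b N) / INR (b n)).
Proof.
  intros HnN; destruct (b_divide n N HnN) as [c Hc].
  rewrite Hc, mult_INR; pose proof (b_pos n).
  apply is_int_eq with (IZR t * INR c); [field; lra|].
  apply is_int_mul; [|rewrite INR_IZR_INZ]; apply is_int_IZR.
Qed.

Definition q (N : nat) : R := INR (b (S N)) / INR (b N).

Lemma q_int N : is_int (q N).
Proof.
  apply is_int_eq with (IZR 1 * INR (b (S N)) / INR (b N)); [unfold q; simpl; lra|].
  apply b_multiple_int; lia.
Qed.

Lemma q_eq N : INR (b (S N)) = q N * INR (b N).
Proof. unfold q; pose proof (b_pos N); field; lra. Qed.

Lemma q_ge1 N : 1 <= q N.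
Proof.
  unfold q; pose proof (b_pos N); pose proof (b_mono N (S N) (le_S _ _ (le_n N))).
  apply Rmult_le_reg_r with (INR (b N)); [lra|].
  unfold Rdiv; rewrite Rmult_assoc, Rinv_l; lra.
Qed.

Lemma rescaled_bounded_zero N0 e :
  (forall k, Rabs (INR (b (N0 + k)) / INR (b N0) * e) <= 1) -> e = 0.
Proof.
  intros Hbound; apply (bounded_multiples_zero e (INR (b N0))); intros k.
  pose proof (b_pos N0); pose proof (b_pos (N0 + k)); specialize (Hbound k).
  rewrite Rabs_mult, (Rabs_pos_eq (_ / _)) in Hbound
    by (apply Rlt_le, Rdiv_lt_0_compat; lra).
  assert (HkN : INR k <= INR (b (N0 + k)))
    by (apply le_INR; pose proof (b_gt_index (N0 + k)); lia).
  assert (Hscaled : INR (b (N0 + k)) * Rabs e <= INR (b N0)).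
  { apply Rmult_le_compat_r with (r := INR (b N0)) in Hbound; [|lra].
    replace (INR (b (N0 + k)) / INR (b N0) * Rabs e * INR (b N0))
      with (INR (b (N0 + k)) * Rabs e) in Hbound by (field; lra); lra. }
  pose proof (Rabs_pos e); nra.
Qed.

End DSequence.

(** * Reals all of whose small multiples stay near Z *)

Lemma sign_exists e : exists s : Z, IZR s * e = Rabs e /\ Rabs (IZR s) = 1.
Proof.
  destruct (Rle_lt_dec 0 e).
  - exists 1%Z; rewrite Rabs_pos_eq, Rabs_R1 by lra; split; [ring|reflexivity].
  - exists (-1)%Z; rewrite Rabs_left, Rabs_left by (simpl; lra); simpl; split; ring.
Qed.

Section Hits.
Variable d : R.
Hypothesis hd : 0 < d <= 1/4.

Definition hits (u B : R) : Prop :=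
  exists t z : Z, Rabs (IZR t) <= B /\ d/8 <= IZR t * u - IZR z <= 7/8.

(* Using t = 1 and t = -1: if u never hits, it lies within d/8 of Z. *)
Lemma no_hit_near_int u B :
  1 <= B -> ~ hits u B -> exists z e, u = IZR z + e /\ Rabs e < d/8.
Proof.
  intros HB Hno; destruct (archimed u) as [Hup1 Hup2].
  set (z0 := (up u - 1)%Z).
  assert (Hz0 : IZR z0 = IZR (up u) - 1) by (unfold z0; rewrite minus_IZR; reflexivity).
  assert (Hplus : ~ (d/8 <= u - IZR z0 <= 7/8)).
  { intros Hin; apply Hno; exists 1%Z, z0; rewrite Rabs_R1, Rmult_1_l; auto. }
  assert (Hminus : ~ (d/8 <= - u + IZR z0 + 1 <= 7/8)).
  { intros Hin; apply Hno; exists (-1)%Z, (- z0 - 1)%Z.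
    rewrite minus_IZR, opp_IZR, Rabs_left by (simpl; lra); simpl; split; lra. }
  destruct (Rlt_dec (u - IZR z0) (d/8)).
  - exists z0, (u - IZR z0); rewrite Rabs_pos_eq by lra; split; [ring|lra].
  - exists (z0 + 1)%Z, (u - IZR z0 - 1); rewrite plus_IZR, Rabs_left1 by lra.
    split; [ring|lra].
Qed.

(* If u = z + e never hits, the multiples k |e| with k <= B stay below d/8:
   the first multiple to cross d/8 would land in [d/8, d/4) and hit. *)
Lemma no_hit_multiples_small u B z e :
  u = IZR z + e -> Rabs e < d/8 -> ~ hits u B ->
  forall k : nat, INR k <= B -> INR k * Rabs e < d/8.
Proof.
  intros Hu He Hno; destruct (sign_exists e) as [s [Hs Hs1]].
  induction k as [|k IH]; intros Hk; [simpl; lra|].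
  rewrite S_INR in *; specialize (IH ltac:(lra)).
  destruct (Rlt_dec ((INR k + 1) * Rabs e) (d/8)) as [Hlt|Hge]; [exact Hlt|exfalso].
  apply Hno; exists (s * Z.of_nat (S k))%Z, (s * Z.of_nat (S k) * z)%Z.
  rewrite !mult_IZR, <- INR_IZR_INZ, S_INR, Rabs_mult, Hs1, Rabs_pos_eq
    by (pose proof (pos_INR k); lra).
  split; [lra|].
  replace (IZR s * (INR k + 1) * u - IZR s * (INR k + 1) * IZR z)
    with ((INR k + 1) * (IZR s * e)) by (rewrite Hu; ring).
  rewrite Hs; pose proof (Rabs_pos e); lra.
Qed.

(* Taking k = floor B >= B/2 above: a non-hitting u is within d/(4B) of Z. *)
Lemma no_hit_error_bound u B :
  2 <= B -> ~ hits u B -> exists z e, u = IZR z + e /\ Rabs e * B < d/4.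
Proof.
  intros HB Hno.
  destruct (no_hit_near_int u B ltac:(lra) Hno) as [z [e [Hu He]]].
  destruct (nat_floor B ltac:(lra)) as [k Hk].
  pose proof (no_hit_multiples_small u B z e Hu He Hno k (proj1 Hk)) as Hsmall.
  exists z, e; split; [exact Hu|].
  assert (B / 2 * Rabs e <= INR k * Rabs e)
    by (apply Rmult_le_compat_r; [apply Rabs_pos|lra]).
  lra.
Qed.

End Hits.

(** * Levels where b N * alpha cannot be detected are integral *)

Section Levels.
Variable b : nat -> nat.
Hypothesis hb : D_sequence b.
Variable alpha : R.

(* If b N * alpha = z + E with |E| q N < 1/2, and level N+1 also has a small
   error, then that error is exactly q N * E: multiplying by the integer q N
   keeps the error below 1/2, so the two decompositions agree. *)
Lemma error_propagates N z E :
  INR (b N) * alpha = IZR z + E -> Rabs E * q b N < 1/2 ->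
  (exists z' e', INR (b (S N)) * alpha = IZR z' + e' /\ Rabs e' * q b (S N) < 1/2) ->
  exists z', INR (b (S N)) * alpha = IZR z' + q b N * E /\
             Rabs (q b N * E) * q b (S N) < 1/2.
Proof.
  intros Hz HE [z' [e' [Hz' He']]].
  destruct (q_int b hb N) as [w Hw].
  pose proof (q_ge1 b hb N); pose proof (q_ge1 b hb (S N)).
  assert (Hnext : INR (b (S N)) * alpha = IZR (w * z) + q b N * E).
  { rewrite q_eq, mult_IZR, <- Hw by exact hb.
    rewrite Rmult_assoc, Hz; ring. }
  assert (HqE : Rabs (q b N * E) < 1/2)
    by (rewrite Rabs_mult, Rabs_pos_eq by lra; lra).
  assert (He'half : Rabs e' < 1/2) by (pose proof (Rabs_pos e'); nra).
  assert (Heq : q b N * E = e')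
    by (apply (small_error_unique (w * z) _ z'); [congruence|assumption|assumption]).
  exists z'; rewrite Heq; split; assumption.
Qed.

Variable d : R.
Hypothesis hd : 0 < d <= 1/4.

(* Level N is good when a multiple t * b N with |t| <= d * q N / 2 moves
   alpha by at least d/8 modulo Z; such t * b N lie in V_{b,m} (see below). *)
Definition good_level (N : nat) : Prop := hits d (INR (b N) * alpha) (d * q b N / 2).

Lemma level_error N : 4 / d <= q b N -> ~ good_level N ->
  exists z e, INR (b N) * alpha = IZR z + e /\ Rabs e * q b N < 1/2.
Proof.
  intros Hq Hbad.
  assert (HdQ : 4 <= d * q b N).
  { apply Rmult_le_compat_l with (r := d) in Hq; [|lra].
    replace (d * (4 / d)) with 4 in Hq by (field; lra); lra. }
  destruct (no_hit_error_bound d hd (INR (b N) * alpha) (d * q b N / 2) ltac:(lra) Hbad)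
    as [z [e [Hu He]]].
  exists z, e; split; [exact Hu|].
  apply Rmult_lt_reg_l with (d / 2); [lra|].
  replace (d / 2 * (Rabs e * q b N)) with (Rabs e * (d * q b N / 2)) by field; lra.
Qed.

(* If from N0 on every level is non-good with large quotient, then
   b N0 * alpha is an integer: its error would be multiplied by
   b (N0+k) / b N0 while staying below 1/2 forever. *)
Lemma eventually_bad_integral N0 :
  (forall N, (N0 <= N)%nat -> 4 / d <= q b N) ->
  (forall N, (N0 <= N)%nat -> ~ good_level N) ->
  is_int (INR (b N0) * alpha).
Proof.
  intros Hq Hbad.
  assert (Herr : forall N, (N0 <= N)%nat -> exists z e,
            INR (b N) * alpha = IZR z + e /\ Rabs e * q b N < 1/2)
    by (intros N HN; apply level_error; auto).
  destruct (Herr N0 (le_n _)) as [z [e [Hz He]]].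
  pose proof (b_pos b hb N0) as Hb0.
  assert (Hinv : forall k, exists z', INR (b (N0 + k)) * alpha =
            IZR z' + INR (b (N0 + k)) / INR (b N0) * e /\
            Rabs (INR (b (N0 + k)) / INR (b N0) * e) * q b (N0 + k) < 1/2).
  { induction k as [|k [z' [IH1 IH2]]].
    - exists z; rewrite Nat.add_0_r.
      replace (INR (b N0) / INR (b N0) * e) with e by (field; lra); auto.
    - rewrite Nat.add_succ_r, (q_eq b hb (N0 + k)).
      replace (q b (N0 + k) * INR (b (N0 + k)) / INR (b N0) * e)
        with (q b (N0 + k) * (INR (b (N0 + k)) / INR (b N0) * e)) by (field; lra).
      rewrite <- (q_eq b hb (N0 + k)).
      apply error_propagates with z'; auto.
      apply Herr; lia. }
  assert (He0 : e = 0).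
  { apply (rescaled_bounded_zero b hb N0); intros k.
    destruct (Hinv k) as [z' [_ Hk]]; pose proof (q_ge1 b hb (N0 + k)).
    pose proof (Rabs_pos (INR (b (N0 + k)) / INR (b N0) * e)); nra. }
  exists z; rewrite Hz, He0; ring.
Qed.

End Levels.

(** * Cofinally many good levels produce a far element of V_{b,m} *)

Section Climb.
Variable b : nat -> nat.
Hypothesis hb : D_sequence b.
Variable alpha : R.
Variable m : nat.
Hypothesis hm : (1 <= m)%nat.
Let d := 1 / (4 * INR m).

Lemma d_range : 0 < d <= 1/4.
Proof.
  apply (le_INR 1) in hm; simpl in hm; unfold d; split.
  - apply Rdiv_lt_0_compat; lra.
  - apply Rmult_le_reg_r with (4 * INR m); [lra|].
    unfold Rdiv; rewrite Rmult_assoc, Rinv_l; lra.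
Qed.

Lemma V_b_zero : V_b b m 0%Z.
Proof.
  intros n _; exists 0%Z; pose proof d_range.
  unfold Rdiv at 1; rewrite Rmult_0_l, Rminus_0_r, Rabs_R0; fold d; lra.
Qed.

(* V_{b,m} is stable under adding t * b N with |t| <= d q N / 2, provided the
   element j is small compared with b (N+1): coordinates n <= N do not see
   t * b N modulo Z, and coordinates n > N stay below d in absolute value. *)
Lemma V_b_shift j t N :
  V_b b m j -> Rabs (IZR j) <= d / 2 * INR (b (S N)) ->
  Rabs (IZR t) <= d * q b N / 2 -> V_b b m (j + t * Z.of_nat (b N)).
Proof.
  intros Hj Hjsmall Ht n Hn.
  rewrite plus_IZR, mult_IZR, <- INR_IZR_INZ.
  pose proof (b_pos b hb n) as Hbn; pose proof d_range.
  destruct (le_lt_dec n N) as [HnN|HNn].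
  - destruct (Hj n Hn) as [z Hz]; destruct (b_multiple_int b hb n N t HnN) as [w Hw].
    exists (z + w)%Z; rewrite plus_IZR, <- Hw.
    replace ((IZR j + IZR t * INR (b N)) / INR (b n)
             - (IZR z + IZR t * INR (b N) / INR (b n)))
      with (IZR j / INR (b n) - IZR z) by (field; lra).
    exact Hz.
  - exists 0%Z; rewrite Rminus_0_r; fold d.
    unfold Rdiv; rewrite Rabs_mult, Rabs_inv, (Rabs_pos_eq (INR (b n))) by lra.
    apply Rmult_le_reg_r with (INR (b n)); [lra|].
    rewrite Rmult_assoc, Rinv_l, Rmult_1_r by lra.
    pose proof (b_mono b hb (S N) n HNn); pose proof (b_pos b hb N).
    assert (Htb : Rabs (IZR t) * INR (b N) <= d / 2 * INR (b (S N))).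
    { rewrite (q_eq b hb N); apply Rmult_le_compat_r with (r := INR (b N)) in Ht; lra. }
    apply Rle_trans with (Rabs (IZR j) + Rabs (IZR t) * INR (b N)).
    + rewrite <- (Rabs_pos_eq (INR (b N))) at 2 by lra; rewrite <- Rabs_mult.
      apply Rabs_triang.
    + assert (d * INR (b (S N)) <= d * INR (b n)) by (apply Rmult_le_compat_l; lra).
      lra.
Qed.

Lemma eventually_small j : exists N0, forall N, (N0 <= N)%nat ->
  Rabs (IZR j) <= d / 2 * INR (b (S N)).
Proof.
  pose proof d_range.
  destruct (INR_archimed (d / 2) (Rabs (IZR j))) as [N0 HN0]; [lra|].
  exists N0; intros N HN.
  assert (INR N0 <= INR (b (S N)))
    by (apply le_INR; pose proof (b_gt_index b hb (S N)); lia).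
  assert (d / 2 * INR N0 <= d / 2 * INR (b (S N))) by (apply Rmult_le_compat_l; lra).
  lra.
Qed.

Definition far_element : Prop :=
  exists j z : Z, V_b b m j /\ 1/8 <= IZR j * alpha - IZR z <= 7/8.

Hypothesis hgood : forall N0, exists N, (N0 <= N)%nat /\ good_level b alpha d N.

Lemma climb_step j z :
  V_b b m j -> 0 <= IZR j * alpha - IZR z < 1/8 ->
  far_element \/ exists j' z', V_b b m j' /\
    IZR j * alpha - IZR z + d/8 <= IZR j' * alpha - IZR z' < 1/8.
Proof.
  intros Hj Hs.
  destruct (eventually_small j) as [N0 HN0].
  destruct (hgood N0) as [N [HN [t [z' [Ht Hv]]]]].
  pose proof d_range; pose proof (b_pos b hb (S N)).
  destruct (Rle_lt_dec (1/8) (IZR t * (INR (b N) * alpha) - IZR z')) as [Hbig|Hsmall].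
  - left; exists (0 + t * Z.of_nat (b N))%Z, z'; split.
    + apply V_b_shift; [apply V_b_zero| |exact Ht].
      rewrite Rabs_R0; apply Rmult_le_pos; lra.
    + rewrite plus_IZR, mult_IZR, <- INR_IZR_INZ; simpl IZR; lra.
  - set (j' := (j + t * Z.of_nat (b N))%Z).
    assert (Hj' : V_b b m j') by (apply V_b_shift; auto).
    assert (Hsum : IZR j' * alpha - IZR (z + z') =
                   (IZR j * alpha - IZR z) + (IZR t * (INR (b N) * alpha) - IZR z'))
      by (unfold j'; rewrite !plus_IZR, mult_IZR, <- INR_IZR_INZ; ring).
    destruct (Rle_lt_dec (1/8) (IZR j' * alpha - IZR (z + z'))).
    + left; exists j', (z + z')%Z; split; [exact Hj'|lra].
    + right; exists j', (z + z')%Z; split; [exact Hj'|lra].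
Qed.

Lemma climb n : far_element \/
  exists j z, V_b b m j /\ INR n * (d/8) <= IZR j * alpha - IZR z < 1/8.
Proof.
  induction n as [|n [Hfar|[j [z [Hj Hx]]]]].
  - right; exists 0%Z, 0%Z; split; [apply V_b_zero|simpl; lra].
  - left; exact Hfar.
  - pose proof d_range; pose proof (pos_INR n).
    destruct (climb_step j z Hj) as [Hfar|[j' [z' [Hj' Hx']]]]; [nra|left; exact Hfar|].
    right; exists j', z'; rewrite S_INR; split; [exact Hj'|lra].
Qed.

(* After about 1/d steps the climb must have left [0, 1/8). *)
Lemma cofinal_good_far : far_element.
Proof.
  pose proof d_range.
  destruct (INR_archimed (d / 8) (1/8)) as [n Hn]; [lra|].
  destruct (climb n) as [Hfar|[j [z [_ Hx]]]]; [exact Hfar|lra].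
Qed.

End Climb.

Lemma continuity_near_int b chi :
  Z_character chi -> tau_b_continuous b chi ->
  exists m, (1 <= m)%nat /\
    forall j, V_b b m j -> exists z, Rabs (IZR j * chi 1%Z - IZR z) < 1/8.
Proof.
  intros Hchi Hcont.
  destruct (Hcont 0%Z (1/8) ltac:(lra)) as [m [Hm Hnear]].
  exists m; split; [exact Hm|]; intros j Hj.
  destruct (Hnear j Hj) as [z Hz]; rewrite Z.add_0_l in Hz.
  destruct (character_linear chi Hchi j) as [w1 Hw1].
  destruct (character_linear chi Hchi 0%Z) as [w0 Hw0]; simpl IZR in Hw0.
  exists (z - w1 + w0)%Z; rewrite plus_IZR, minus_IZR.
  replace (IZR j * chi 1%Z - (IZR z - IZR w1 + IZR w0)) with (chi j - chi 0%Z - IZR z)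
    by lra.
  exact Hz.
Qed.

(* If every j in V_{b,m} has j * alpha within 1/8 of Z, then b N * alpha is an
   integer for some N: otherwise either good levels are cofinal (and the climb
   produces a far element of V_{b,m}), or they are eventually absent. *)
Lemma integral_level b alpha m :
  D_sequence b -> ratio_to_infty b -> (1 <= m)%nat ->
  (forall j, V_b b m j -> exists z, Rabs (IZR j * alpha - IZR z) < 1/8) ->
  exists N, is_int (INR (b N) * alpha).
Proof.
  intros hb hratio hm Hnear.
  set (d := 1 / (4 * INR m)); pose proof (d_range m hm) as hd.
  destruct (classic (forall N0, exists N, (N0 <= N)%nat /\ good_level b alpha d N))
    as [Hcofinal|Hnot].
  - exfalso.
    destruct (cofinal_good_far b hb alpha m hm Hcofinal) as [j [z [Hj Hfar]]].
    destruct (Hnear j Hj) as [z' Hz'].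
    exact (not_near_and_far _ _ _ Hfar Hz').
  - apply not_all_ex_not in Hnot as [N0 HN0].
    destruct (hratio (4 / d)) as [N1 HN1].
    exists (max N0 N1); apply (eventually_bad_integral b hb alpha d hd).
    + intros N HN; apply HN1; lia.
    + intros N HN Hgood; apply HN0; exists N; split; [lia|exact Hgood].
Qed.

Lemma coordinate_character c N : is_int c -> c0_continuous_character (fun x => c * x N).
Proof.
  intros [a ->]; split; [|split].
  - intros x y _ _ Hxy; destruct (Hxy N) as [v Hv].
    apply is_int_eq with (IZR a * (x N - y N)); [ring|].
    rewrite Hv; apply is_int_mul; apply is_int_IZR.
  - intros x y _ _; exists 0%Z; simpl; ring.
  - intros x _ eps Heps.
    set (A := Rabs (IZR a)); assert (HA : 0 <= A) by apply Rabs_pos.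
    exists (eps / (A + 1)); split; [apply Rdiv_lt_0_compat; lra|].
    intros y _ Hy; destruct (Hy N) as [z Hz]; exists (a * z)%Z.
    replace (IZR a * x N - IZR a * y N - IZR (a * z))
      with (IZR a * (x N - y N - IZR z)) by (rewrite mult_IZR; ring).
    rewrite Rabs_mult; fold A.
    assert (eps / (A + 1) * (A + 1) = eps) by (field; lra).
    pose proof (Rabs_pos (x N - y N - IZR z)); nra.
Qed.

Theorem corollary4p5 (b : nat -> nat) (hb : D_sequence b)
  (hratio : ratio_to_infty b) (chi : Z -> R)
  (hchi : Z_character chi) (hcont : tau_b_continuous b chi) :
  exists psi : (nat -> R) -> R,
    c0_continuous_character psi /\
    forall k : Z, is_int (chi k - psi (iota b k)).
Proof.
  set (alpha := chi 1%Z).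
  destruct (continuity_near_int b chi hchi hcont) as [m [hm Hnear]].
  destruct (integral_level b alpha m hb hratio hm Hnear) as [N HN].
  (* psi(x) = b (N+1) alpha * x_N, whose value at iota k is k alpha. *)
  set (c := INR (b (S N)) * alpha).
  assert (Hc : is_int c)
    by (unfold c; rewrite (q_eq b hb), Rmult_assoc; apply is_int_mul; [apply q_int|]; auto).
  exists (fun x => c * x N); split; [exact (coordinate_character c N Hc)|].
  intros k; unfold iota, c.
  apply is_int_eq with (chi k - IZR k * alpha); [|apply character_linear; exact hchi].
  pose proof (b_pos b hb (S N)); field; lra.
Qed.
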